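(* Let $(G,\cdot)$ be a loop with identity $e$ and let $(H,\cdot)$ be a non-trivial subloop of $G$ such that $(xs\cdot z)s=x(sz\cdot s)$ for all $x,z\in G$ and $s\in H$. Then $R_{s^n}=R_s^n$ for all $s\in H$ and $n\in\mathbb{Z}$; that is, $xs^n=(\cdots((xs)s)\cdots)s$ ($n$ factors $s$) for all $x\in G$, $s\in H$.
   Context: Juxtaposition binds more tightly than $\cdot$. $R_s:G\to G$ is the right translation $xR_s=x\cdot s$. For $s\in H$ the left and right inverses coincide; call it $s^{-1}$. Powers: $s^0=e$, $s^n=s^{n-1}\cdot s$ for $n>0$, $s^n=(s^{-1})^{|n|}$ for $n<0$; $R_s^n$ is the $n$-th power of the permutation $R_s$ in the symmetric group of $G$. *)

From Stdlib Require Import ZArith.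

(* A loop: a set with a binary operation, two-sided identity e, and unique
   solvability of a*x = b and y*a = b, encoded by the left division
   ldiv a b (= the unique x with a*x = b) and right division rdiv b a
   (= the unique y with y*a = b). *)
Record Loop := {
  carrier :> Type;
  mul : carrier -> carrier -> carrier;
  ldiv : carrier -> carrier -> carrier;
  rdiv : carrier -> carrier -> carrier;
  e : carrier;
  mul_e_l : forall x, mul e x = x;
  mul_e_r : forall x, mul x e = x;
  mul_ldiv : forall a b, mul a (ldiv a b) = b;
  ldiv_mul : forall a b, ldiv a (mul a b) = b;
  rdiv_mul : forall a b, mul (rdiv b a) a = b;
  mul_rdiv : forall a b, rdiv (mul b a) a = b
}.

Arguments mul {L} : rename.
Arguments ldiv {L} : rename.
Arguments rdiv {L} : rename.
Arguments e {L} : rename.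

Definition subloop (G : Loop) (H : G -> Prop) : Prop :=
  H e /\
  (forall x y, H x -> H y -> H (mul x y)) /\
  (forall x y, H x -> H y -> H (ldiv x y)) /\
  (forall x y, H x -> H y -> H (rdiv x y)).

Definition nontrivial (G : Loop) (H : G -> Prop) : Prop :=
  exists s, H s /\ s <> e.

Definition Rt {G : Loop} (s : G) (x : G) : G := mul x s.
Definition Rt_inv {G : Loop} (s : G) (x : G) : G := rdiv x s.

(* inverse of s: the right inverse s \ e (for s in H it coincides with
   the left inverse e / s) *)
Definition linv {G : Loop} (s : G) : G := ldiv s e.

Fixpoint npow {G : Loop} (s : G) (n : nat) : G :=
  match n with
  | O => e
  | S m => mul (npow s m) s
  end.

Definition zpow {G : Loop} (s : G) (n : Z) : G :=
  match n with
  | Z0 => e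
  | Zpos p => npow s (Pos.to_nat p)
  | Zneg p => npow (linv s) (Pos.to_nat p)
  end.

Definition Rpow {G : Loop} (s : G) (n : Z) (x : G) : G :=
  match n with
  | Z0 => x
  | Zpos p => Nat.iter (Pos.to_nat p) (Rt s) x
  | Zneg p => Nat.iter (Pos.to_nat p) (Rt_inv s) x
  end.

From Stdlib Require Import ZArith.

(* The right Bol identity at s, (x s . z) s = x (s z . s), with z := s^n
   turns x s^(n+2) = x ((s s^n) s) into (x s . s^n) s once s commutes with
   s^n; so x s^n = x R_s^n and s s^n = s^n s follow by a joint induction.
   With x := y / s and z := s \ e it gives (y s^-1) s = y, i.e.
   R_(s^-1) = R_s^-1, and since s^-1 lies in H as well the negative powers
   reduce to the positive ones for s^-1. *)

Definition right_bol_at {G : Loop} (s : G) : Prop :=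
  forall x z : G, mul (mul (mul x s) z) s = mul x (mul (mul s z) s).

Section RightBolElement.

Variables (G : Loop) (s : G).
Hypothesis bol : right_bol_at s.

Definition mul_npow_Rt (n : nat) : Prop :=
  forall x : G, mul x (npow s n) = Nat.iter n (Rt s) x.

Definition npow_comm (n : nat) : Prop :=
  mul s (npow s n) = mul (npow s n) s.

Lemma mul_npow_Rt_SS n :
  npow_comm n -> mul_npow_Rt n -> mul_npow_Rt (S (S n)).
Proof.
  intros comm_n pow_n x.
  change (npow s (S (S n))) with (mul (mul (npow s n) s) s).
  rewrite <- comm_n, <- bol, pow_n, Nat.iter_succ_r.
  reflexivity.
Qed.

Lemma npow_comm_SS n :
  npow_comm (S n) -> mul_npow_Rt (S n) -> mul_npow_Rt (S (S n)) ->
  npow_comm (S (S n)).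
Proof.
  intros comm_Sn pow_Sn pow_SSn.
  unfold npow_comm. rewrite pow_SSn, Nat.iter_succ, <- pow_Sn, comm_Sn.
  reflexivity.
Qed.

Lemma mul_npow_Rt_comm n :
  (mul_npow_Rt n /\ npow_comm n) /\ (mul_npow_Rt (S n) /\ npow_comm (S n)).
Proof.
  induction n as [|n [[pow_n comm_n] [pow_Sn comm_Sn]]].
  - unfold mul_npow_Rt, npow_comm; simpl.
    repeat split; intros; rewrite ?mul_e_l, ?mul_e_r; reflexivity.
  - assert (pow_SSn := mul_npow_Rt_SS n comm_n pow_n).
    split; [split; assumption|].
    split; [exact pow_SSn | exact (npow_comm_SS n comm_Sn pow_Sn pow_SSn)].
Qed.

Lemma mul_npow n : mul_npow_Rt n.
Proof. exact (proj1 (proj1 (mul_npow_Rt_comm n))). Qed.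

Lemma mul_linv_mul y : mul (mul y (linv s)) s = y.
Proof.
  pose proof (bol (rdiv y s) (linv s)) as bol_y.
  unfold linv in *.
  rewrite mul_ldiv, mul_e_l, rdiv_mul in bol_y.
  exact bol_y.
Qed.

Lemma Rt_linv y : Rt (linv s) y = Rt_inv s y.
Proof.
  unfold Rt, Rt_inv.
  rewrite <- (mul_linv_mul y) at 2.
  symmetry; apply mul_rdiv.
Qed.

End RightBolElement.

Lemma iter_Rt_linv (G : Loop) (s : G) (k : nat) (x : G) :
  right_bol_at s -> Nat.iter k (Rt (linv s)) x = Nat.iter k (Rt_inv s) x.
Proof.
  intro bol.
  exact (Nat.iter_swap_gen _ _ (fun y => y) _ _ (Rt_linv G s bol) k x).
Qed.

Lemma subloop_linv (G : Loop) (H : G -> Prop) (s : G) :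
  subloop G H -> H s -> H (linv s).
Proof. intros [He [_ [Hldiv _]]] Hs. exact (Hldiv s e Hs He). Qed.

Theorem corollary3p1 (G : Loop) (H : G -> Prop)
  (HH : subloop G H) (Hnt : nontrivial G H)
  (Hid : forall (x z s : G), H s ->
     mul (mul (mul x s) z) s = mul x (mul (mul s z) s)) :
  forall (s : G), H s -> forall (n : Z) (x : G),
    mul x (zpow s n) = Rpow s n x.
Proof.
  intros s Hs n x.
  destruct n as [|p|p]; simpl.
  - apply mul_e_r.
  - exact (mul_npow G s (fun x z => Hid x z s Hs) _ x).
  - assert (Hs' : H (linv s)) by exact (subloop_linv G H s HH Hs).
    rewrite (mul_npow G (linv s) (fun x z => Hid x z _ Hs')).
    exact (iter_Rt_linv G s _ x (fun x z => Hid x z s Hs)).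
Qed.
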